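(* Define real sequences by the Gauss–Legendre iteration: $a_0 = 1$, $b_0 = 1/\sqrt{2}$, $s_0 = \tfrac14$, and for $n \ge 0$ \[ a_{n+1} = \frac{a_n+b_n}{2},\quad b_{n+1} = \sqrt{a_n b_n},\quad c_{n+1} = a_n - a_{n+1},\quad s_{n+1} = s_n - 2^n c_{n+1}^2 . \] Define also sequences by the Borwein iteration: $\alpha_0 = 6-4\sqrt{2}$, $k_0 = 3-2\sqrt{2}$, and for $n\ge 0$ \[ k_n' = \sqrt{1-k_n^2},\quad k_{n+1} = \frac{1-k_n'}{1+k_n'},\quad \alpha_{n+1} = (1+k_{n+1})^2\alpha_n - 2^{n+2}k_{n+1}, \] and set $\widehat{\pi}_n = 1/\alpha_n$. Then for every $n \ge 0$, \[ \widehat{\pi}_n = \frac{a_{n+1}^2}{s_n}. \]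
   Context: All square roots are the positive real square roots; all quantities are computed in exact real arithmetic. *)

From Stdlib Require Import Reals.
Open Scope R_scope.

Fixpoint gl (n : nat) : R * R * R :=
  match n with
  | O => (1, 1 / sqrt 2, 1 / 4)
  | S m =>
      let '(a, b, s) := gl m in
      let a' := (a + b) / 2 in
      let b' := sqrt (a * b) in
      let c' := a - a' in
      (a', b', s - 2 ^ m * c' ^ 2)
  end.

Definition gl_a (n : nat) : R := fst (fst (gl n)).
Definition gl_b (n : nat) : R := snd (fst (gl n)).
Definition gl_s (n : nat) : R := snd (gl n).

Fixpoint bw (n : nat) : R * R :=
  match n with
  | O => (3 - 2 * sqrt 2, 6 - 4 * sqrt 2)
  | S m =>
      let '(k, al) := bw m in
      let k' := sqrt (1 - k ^ 2) in
      let knew := (1 - k') / (1 + k') in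
      (knew, (1 + knew) ^ 2 * al - 2 ^ (m + 2) * knew)
  end.

Definition bw_k (n : nat) : R := fst (bw n).
Definition bw_alpha (n : nat) : R := snd (bw n).
Definition bw_pihat (n : nat) : R := 1 / bw_alpha n.

From Stdlib Require Import Reals Lra Psatz.
Open Scope R_scope.

(* Borwein's iteration is the Gauss-Legendre iteration in disguise: by
   induction, k_n = (a_n - b_n) / (a_n + b_n) and alpha_n = s_n / a_{n+1}^2.
   For the modulus this is the Landen transformation: the complementary
   modulus of (a - b) / (a + b) is the ratio b' / a' of the geometric and
   arithmetic means.  For alpha, (1 + k_{n+1})^2 rescales s_n / a_{n+1}^2 to
   s_n / a_{n+2}^2, and 2^(n+2) k_{n+1} = 2^n (a_{n+1}^2 - b_{n+1}^2) / a_{n+2}^2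
   = 2^n c_{n+1}^2 / a_{n+2}^2 matches the update of s. *)

Lemma gl_a_S n : gl_a (S n) = (gl_a n + gl_b n) / 2.
Proof. unfold gl_a, gl_b; simpl; destruct (gl n) as [[a b] s]; reflexivity. Qed.

Lemma gl_b_S n : gl_b (S n) = sqrt (gl_a n * gl_b n).
Proof. unfold gl_a, gl_b; simpl; destruct (gl n) as [[a b] s]; reflexivity. Qed.

Lemma gl_s_S n : gl_s (S n) = gl_s n - 2 ^ n * (gl_a n - gl_a (S n)) ^ 2.
Proof. unfold gl_a, gl_s; simpl; destruct (gl n) as [[a b] s]; reflexivity. Qed.

Lemma bw_k_S n :
  bw_k (S n) = (1 - sqrt (1 - bw_k n ^ 2)) / (1 + sqrt (1 - bw_k n ^ 2)).
Proof. unfold bw_k; simpl; destruct (bw n) as [k al]; reflexivity. Qed.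

Lemma bw_alpha_S n :
  bw_alpha (S n) = (1 + bw_k (S n)) ^ 2 * bw_alpha n - 2 ^ (n + 2) * bw_k (S n).
Proof. unfold bw_k, bw_alpha; simpl; destruct (bw n) as [k al]; reflexivity. Qed.

Lemma gl_pos n : 0 < gl_a n /\ 0 < gl_b n.
Proof.
  induction n as [|n [Ha Hb]].
  - unfold gl_a, gl_b; simpl.
    assert (0 < sqrt 2) by (apply sqrt_lt_R0; lra).
    split; [lra | apply Rdiv_lt_0_compat; lra].
  - rewrite gl_a_S, gl_b_S; split; [lra | apply sqrt_lt_R0; nra].
Qed.

Lemma arith_sq_sub_geom_sq a b : 0 < a -> 0 < b ->
  ((a + b) / 2) ^ 2 - sqrt (a * b) ^ 2 = ((a - b) / 2) ^ 2.
Proof. intros Ha Hb; rewrite pow2_sqrt by nra; field. Qed.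

Lemma landen_comodulus a b : 0 < a -> 0 < b ->
  sqrt (1 - ((a - b) / (a + b)) ^ 2) = sqrt (a * b) / ((a + b) / 2).
Proof.
  intros Ha Hb.
  assert (Hg : 0 < sqrt (a * b)) by (apply sqrt_lt_R0; nra).
  rewrite <- (sqrt_pow2 (sqrt (a * b) / ((a + b) / 2)))
    by (apply Rlt_le, Rdiv_lt_0_compat; lra).
  f_equal.
  unfold Rdiv at 2; rewrite Rpow_mult_distr, pow_inv, pow2_sqrt by nra.
  field; lra.
Qed.

Lemma landen_modulus a b : 0 < a -> 0 < b ->
  let k' := sqrt (1 - ((a - b) / (a + b)) ^ 2) in
  let A := (a + b) / 2 in
  let B := sqrt (a * b) in
  (1 - k') / (1 + k') = (A - B) / (A + B).
Proof.
  intros Ha Hb k' A B.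
  assert (HB : 0 < B) by (apply sqrt_lt_R0; nra).
  unfold k'; rewrite landen_comodulus by assumption; fold A B.
  field; unfold A; lra.
Qed.

Lemma bw_k_gl n : bw_k n = (gl_a n - gl_b n) / (gl_a n + gl_b n).
Proof.
  induction n as [|n IH].
  - unfold bw_k, gl_a, gl_b; simpl.
    assert (Hr : 0 < sqrt 2) by (apply sqrt_lt_R0; lra).
    assert (Hr2 : sqrt 2 * sqrt 2 = 2) by (apply sqrt_sqrt; lra).
    field_simplify_eq; nra.
  - destruct (gl_pos n) as [Ha Hb].
    rewrite bw_k_S, IH, landen_modulus, gl_a_S, gl_b_S by assumption.
    reflexivity.
Qed.

Lemma bw_alpha_step (m : nat) a A B s : 0 < A -> 0 < B ->
  A ^ 2 - B ^ 2 = (a - A) ^ 2 ->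
  let k := (A - B) / (A + B) in
  (1 + k) ^ 2 * (s / A ^ 2) - 2 ^ (m + 2) * k
  = (s - 2 ^ m * (a - A) ^ 2) / ((A + B) / 2) ^ 2.
Proof.
  intros HA HB Hc k; unfold k.
  rewrite <- Hc, pow_add.
  field; lra.
Qed.

Lemma bw_alpha_gl n : bw_alpha n = gl_s n / gl_a (S n) ^ 2.
Proof.
  induction n as [|n IH].
  - rewrite gl_a_S; unfold bw_alpha, gl_a, gl_b, gl_s; simpl.
    assert (Hr : 0 < sqrt 2) by (apply sqrt_lt_R0; lra).
    assert (Hr2 : sqrt 2 * sqrt 2 = 2) by (apply sqrt_sqrt; lra).
    field_simplify_eq; [nra | lra].
  - destruct (gl_pos n) as [Ha Hb].
    destruct (gl_pos (S n)) as [HA HB].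
    rewrite bw_alpha_S, IH, bw_k_gl, gl_s_S, (gl_a_S (S n)).
    apply bw_alpha_step; try assumption.
    rewrite gl_a_S, gl_b_S, arith_sq_sub_geom_sq by assumption.
    f_equal; field.
Qed.

Theorem theorem1 : forall n : nat, bw_pihat n = gl_a (S n) ^ 2 / gl_s n.
Proof.
  intro n; unfold bw_pihat.
  rewrite bw_alpha_gl.
  destruct (gl_pos (S n)) as [HA _].
  unfold Rdiv; rewrite Rmult_1_l, Rinv_mult, Rinv_inv; ring.
Qed.
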